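(* Let $R$ be a finite Frobenius ring and $M=\{x_0=0,x_1,\ldots,x_n\}$ a finite $R$-bimodule. Then all matrices of the form $[\chi(B(x_i,x_j))]_{0\le i,j\le n}$, where $\chi$ ranges over generating characters of $R$ and $B$ over non-degenerate bilinear forms on $M$, are equivalent to one another.
   Context: A bilinear form on $M$ is a biadditive map $B:M\times M\to R$ with $B(rx,y)=rB(x,y)$ and $B(x,yr)=B(x,y)r$; it is non-degenerate if its left and right kernels are zero. A character of $R$ is a group homomorphism $(R,+)\to\mathbb{C}^*$; it is generating if its kernel contains no nonzero left ideal and no nonzero right ideal of $R$. Two matrices with root-of-unity entries are equivalent if one is obtained from the other by permuting rows and columns and multiplying rows and columns by roots of unity. *)

From HB Require Import structures.
From mathcomp Require Import all_boot all_order all_algebra all_fingroup.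
From mathcomp Require Import algC.
Set Implicit Arguments. Unset Strict Implicit. Unset Printing Implicit Defensive.
Import GRing.Theory.
Local Open Scope ring_scope.

(* Complex numbers are modelled by algC (every character of a
   finite abelian group takes values in roots of unity, which lie in algC). *)

Section Defs.
Variable R : finNzRingType.

Definition is_character (chi : R -> algC) : Prop :=
  (forall a, chi a != 0) /\ (forall a b, chi (a + b) = chi a * chi b).

Definition is_left_ideal (I : {set R}) : Prop :=
  0 \in I /\ (forall a b, a \in I -> b \in I -> a - b \in I) /\
  (forall r a, a \in I -> r * a \in I).

Definition is_right_ideal (I : {set R}) : Prop :=
  0 \in I /\ (forall a b, a \in I -> b \in I -> a - b \in I) /\
  (forall r a, a \in I -> a * r \in I).

Definition generating_character (chi : R -> algC) : Prop :=
  is_character chi /\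
  (forall I : {set R}, is_left_ideal I -> (forall a, a \in I -> chi a = 1) ->
     I = [set 0]) /\
  (forall I : {set R}, is_right_ideal I -> (forall a, a \in I -> chi a = 1) ->
     I = [set 0]).

(* A finite ring is Frobenius iff it admits a generating character (Wood). *)
Definition finite_Frobenius : Prop := exists chi, generating_character chi.

Variable M : finZmodType.

Definition is_bimodule (lact : R -> M -> M) (ract : M -> R -> M) : Prop :=
  (forall r x y, lact r (x + y) = lact r x + lact r y) /\
  (forall r s x, lact (r + s) x = lact r x + lact s x) /\
  (forall r s x, lact (r * s) x = lact r (lact s x)) /\
  (forall x, lact 1 x = x) /\
  (forall r x y, ract (x + y) r = ract x r + ract y r) /\
  (forall r s x, ract x (r + s) = ract x r + ract x s) /\
  (forall r s x, ract x (r * s) = ract (ract x r) s) /\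
  (forall x, ract x 1 = x) /\
  (forall r s x, ract (lact r x) s = lact r (ract x s)).

Definition bimod_bilinear_form (lact : R -> M -> M) (ract : M -> R -> M)
  (B : M -> M -> R) : Prop :=
  [/\ (forall x y z, B (x + y) z = B x z + B y z),
      (forall x y z, B x (y + z) = B x y + B x z),
      (forall r x y, B (lact r x) y = r * B x y) &
      (forall r x y, B x (ract y r) = B x y * r)].

Definition bimod_nondegenerate (B : M -> M -> R) : Prop :=
  (forall x, (forall y, B x y = 0) -> x = 0) /\
  (forall y, (forall x, B x y = 0) -> y = 0).

End Defs.

Definition root_of_unity (z : algC) : Prop := exists2 n : nat, (0 < n)%N & z ^+ n = 1.

(* Matrices with rows and columns indexed by the finite set M = {x_0 = 0, ..., x_n}. *)
Definition mx_equivalent (M : finType) (H1 H2 : M -> M -> algC) : Prop :=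
  exists (s t : {perm M}) (a b : M -> algC),
    (forall i, root_of_unity (a i)) /\ (forall j, root_of_unity (b j)) /\
    (forall i j, H2 i j = a i * b j * H1 (s i) (t j)).

Definition char_form_matrix (R : finNzRingType) (M : finType)
  (chi : R -> algC) (B : M -> M -> R) : M -> M -> algC :=
  fun x y => chi (B x y).

From HB Require Import structures.
From mathcomp Require Import all_boot all_order all_algebra all_fingroup.
From mathcomp Require Import algC.
Set Implicit Arguments. Unset Strict Implicit. Unset Printing Implicit Defensive.
Import GRing.Theory Num.Theory.
Local Open Scope ring_scope.

(* For a generating character chi and a non-degenerate form B, the pairing
   e(x, y) = chi (B x y) is a bicharacter of (M, +) that is non-degenerate on
   both sides: with x (or y) fixed, the values B x y form a one-sided ideal of
   R, which must vanish if it lies in ker chi.  An orthogonality computation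
   shows that the rows e(x, .) of such a pairing exhaust the characters of
   (M, +), and non-degeneracy makes them pairwise distinct.  Hence the two
   matrices have the same rows up to a permutation; no scaling is needed. *)

Section AdditiveCharacters.
Variable G : zmodType.

Definition additive_char (psi : G -> algC) : Prop :=
  (forall a, psi a != 0) /\ {morph psi : a b / a + b >-> a * b}.

Variable psi : G -> algC.
Hypothesis psi_char : additive_char psi.

Lemma additive_char0 : psi 0 = 1.
Proof.
case: psi_char => nz psiD; apply: (mulfI (nz 0)).
by rewrite -psiD addr0 mulr1.
Qed.

Lemma additive_charN a : psi (- a) = (psi a)^-1.
Proof.
case: psi_char => nz psiD; apply: (mulIf (nz a)).
by rewrite -psiD addNr additive_char0 mulVf.
Qed.

End AdditiveCharacters.

Lemma sum_multiplicative_eq0 (G : finZmodType) (psi : G -> algC) z :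
  {morph psi : a b / a + b >-> a * b} -> psi z != 1 -> \sum_y psi y = 0.
Proof.
move=> psiD psi_z.
have sum_psi : \sum_y psi y = psi z * \sum_y psi y.
  rewrite mulr_sumr (reindex_inj (addrI z)) /=.
  by apply: eq_bigr => y _; rewrite psiD.
have /eqP : (1 - psi z) * \sum_y psi y = 0 by rewrite mulrBl mul1r -sum_psi subrr.
by rewrite mulf_eq0 subr_eq0 eq_sym (negbTE psi_z) => /eqP.
Qed.

Section Bicharacters.
Variables G H : finZmodType.

Definition bicharacter (e : G -> H -> algC) : Prop :=
  (forall x, additive_char (e x)) /\ (forall y, additive_char (e^~ y)).

Definition left_nondegenerate (e : G -> H -> algC) : Prop :=
  forall x, (forall y, e x y = 1) -> x = 0.

Definition right_nondegenerate (e : G -> H -> algC) : Prop :=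
  forall y, (forall x, e x y = 1) -> y = 0.

Variable e : G -> H -> algC.
Hypothesis e_bichar : bicharacter e.

Lemma bicharacter_column_sum y : right_nondegenerate e ->
  \sum_x e x y = if y == 0 then #|G|%:R else 0.
Proof.
move=> e_rnd; case: eqP => [-> | /eqP y_nz].
  rewrite -sumr_const; apply: eq_bigr => x _.
  exact: additive_char0 (e_bichar.1 x).
have [x e_xy] : exists x, e x y != 1.
  apply/existsP; apply: contraT => /existsPn e_y1; case/eqP: y_nz.
  by apply: e_rnd => x; apply/eqP; rewrite -[_ == _]negbK e_y1.
exact: sum_multiplicative_eq0 (e_bichar.2 y).2 e_xy.
Qed.

Lemma bicharacter_rows_complete (psi : H -> algC) :
  right_nondegenerate e -> additive_char psi -> exists x, e x =1 psi.
Proof.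
move=> e_rnd psi_char.
have [x /forallP e_x | no_row] := pickP (fun x => [forall y, e x y == psi y]).
  by exists x => y; apply/eqP.
(* S vanishes termwise if psi is no row, yet the column sums give S = |G|. *)
pose S := \sum_x \sum_y psi y * e (- x) y.
have S_eq0 : S = 0.
  apply: big1 => x _; have /forallPn [y e_xy] := negbT (no_row x).
  apply: (@sum_multiplicative_eq0 _ (fun y => psi y * e (- x) y) y).
    by move=> a b; rewrite psi_char.2 (e_bichar.1 _).2 mulrACA.
  apply: contra e_xy => /eqP psi_e; apply/eqP.
  have e_nz : e x y != 0 := (e_bichar.1 x).1 y.
  rewrite (additive_charN (e_bichar.2 y)) in psi_e.
  by rewrite -[psi y](divfK e_nz) psi_e mul1r.
have S_card : S = #|G|%:R.
  have sum_opp y : \sum_x e (- x) y = \sum_x e x y.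
    by rewrite [RHS](reindex_inj oppr_inj).
  rewrite /S exchange_big /=.
  under eq_bigr => y _ do rewrite -mulr_sumr sum_opp bicharacter_column_sum //.
  rewrite (bigD1 0) //= big1 ?addr0 => [|y /negbTE ->]; last by rewrite mulr0.
  by rewrite eqxx (additive_char0 psi_char) mul1r.
have /eqP := S_card; rewrite S_eq0 eq_sym pnatr_eq0 => /eqP G_empty.
by have := card0_eq G_empty 0; rewrite inE.
Qed.

Lemma bicharacter_rows_inj :
  left_nondegenerate e -> forall x1 x2, e x1 =1 e x2 -> x1 = x2.
Proof.
move=> e_lnd x1 x2 e12; apply/eqP; rewrite -subr_eq0; apply/eqP/e_lnd => y.
have [e_nz e_D] := e_bichar.2 y.
by rewrite e_D (additive_charN (e_bichar.2 y)) e12 mulfV.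
Qed.

End Bicharacters.

Lemma bicharacter_rows_perm (G H : finZmodType) (e1 e2 : G -> H -> algC) :
  bicharacter e1 -> bicharacter e2 ->
  right_nondegenerate e1 -> left_nondegenerate e2 ->
  exists s : {perm G}, forall x, e2 x =1 e1 (s x).
Proof.
move=> e1_bichar e2_bichar e1_rnd e2_lnd.
have [f e1f_e2] : exists f : G -> G, forall x, e1 (f x) =1 e2 x.
  apply: (fin_all_exists (P := fun x x' => e1 x' =1 e2 x)) => x.
  by have := bicharacter_rows_complete e1_bichar e1_rnd (e2_bichar.1 x).
have f_inj : injective f.
  move=> x1 x2 f12; apply: (bicharacter_rows_inj e2_bichar e2_lnd) => y.
  by rewrite -!e1f_e2 f12.
by exists (perm f_inj) => x y; rewrite permE e1f_e2.
Qed.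

Section AdditiveMaps.
Variables (U V : zmodType) (f : U -> V).
Hypothesis fD : {morph f : a b / a + b}.

Lemma additive_map0 : f 0 = 0.
Proof. by apply: (addIr (f 0)); rewrite -fD !add0r. Qed.

Lemma additive_mapB a b : f (a - b) = f a - f b.
Proof.
rewrite fD; congr (_ + _); apply: (addrI (f b)).
by rewrite -fD !subrr additive_map0.
Qed.

End AdditiveMaps.

Section CharacterOfForm.
Variables (R : finNzRingType) (M : finZmodType).
Variables (lact : R -> M -> M) (ract : M -> R -> M) (B : M -> M -> R).
Hypothesis B_form : bimod_bilinear_form lact ract B.

Lemma form_row_right_ideal x : is_right_ideal [set B x y | y in M].
Proof.
have [_ BD _ BZ] := B_form.
split; first by apply/imsetP; exists 0; rewrite ?(additive_map0 (BD x)).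
split=> [_ _ /imsetP[y1 _ ->] /imsetP[y2 _ ->] | r _ /imsetP[y _ ->]];
  apply/imsetP.
- by exists (y1 - y2); rewrite ?(additive_mapB (BD x)).
- by exists (ract y r); rewrite ?BZ.
Qed.

Lemma form_column_left_ideal y : is_left_ideal [set B x y | x in M].
Proof.
have [DB _ ZB _] := B_form.
have DBy : {morph B^~ y : a b / a + b} by move=> a b; apply: DB.
split; first by apply/imsetP; exists 0; rewrite ?(additive_map0 DBy).
split=> [_ _ /imsetP[x1 _ ->] /imsetP[x2 _ ->] | r _ /imsetP[x _ ->]];
  apply/imsetP.
- by exists (x1 - x2); rewrite ?(additive_mapB DBy).
- by exists (lact r x); rewrite ?ZB.
Qed.

Variable chi : R -> algC.

Lemma character_form_bicharacter :
  is_character chi -> bicharacter (fun x y => chi (B x y)).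
Proof.
case=> chi_nz chiD; have [DB BD _ _] := B_form.
by split=> [x | y]; split=> // a b; rewrite ?DB ?BD chiD.
Qed.

Hypotheses (chi_gen : generating_character chi) (B_nondeg : bimod_nondegenerate B).

Lemma character_form_left_nondegenerate :
  left_nondegenerate (fun x y => chi (B x y)).
Proof.
move=> x chi_row1; apply: B_nondeg.1 => y.
have [_ [_ ker_right]] := chi_gen.
have row0 : [set B x y | y in M] = [set 0].
  by apply: ker_right (form_row_right_ideal x) _ => _ /imsetP[z _ ->].
by apply/set1P; rewrite -row0; apply/imsetP; exists y.
Qed.

Lemma character_form_right_nondegenerate :
  right_nondegenerate (fun x y => chi (B x y)).
Proof.
move=> y chi_col1; apply: B_nondeg.2 => x.
have [_ [ker_left _]] := chi_gen.
have col0 : [set B x y | x in M] = [set 0].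
  by apply: ker_left (form_column_left_ideal y) _ => _ /imsetP[z _ ->].
by apply/set1P; rewrite -col0; apply/imsetP; exists x.
Qed.

End CharacterOfForm.

Theorem propositionA5 (R : finNzRingType) (M : finZmodType)
  (lact : R -> M -> M) (ract : M -> R -> M) :
  finite_Frobenius R -> is_bimodule lact ract ->
  forall (chi1 chi2 : R -> algC) (B1 B2 : M -> M -> R),
    generating_character chi1 -> generating_character chi2 ->
    bimod_bilinear_form lact ract B1 -> bimod_nondegenerate B1 ->
    bimod_bilinear_form lact ract B2 -> bimod_nondegenerate B2 ->
    mx_equivalent (char_form_matrix chi1 B1) (char_form_matrix chi2 B2).
Proof.
move=> _ _ chi1 chi2 B1 B2 chi1_gen chi2_gen B1_form B1_nd B2_form B2_nd.
have [s rows_s] := bicharacter_rows_perm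
  (character_form_bicharacter B1_form chi1_gen.1)
  (character_form_bicharacter B2_form chi2_gen.1)
  (character_form_right_nondegenerate B1_form chi1_gen B1_nd)
  (character_form_left_nondegenerate B2_form chi2_gen B2_nd).
exists s, 1%g, (fun _ => 1), (fun _ => 1).
split; [by exists 1%N | split; [by exists 1%N | move=> i j]].
by rewrite /char_form_matrix perm1 !mul1r rows_s.
Qed.
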